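(* Let $p=(p_i)_{i\in\mathbb{N}}$ be a cookie environment with $p_i\in[\frac12,1)$ for all $i$, and suppose $\delta=\sum_{i=1}^\infty(2p_i-1)<\infty$. Let $\rho(x)=\mathbb{E}[U_p(x)]-x$, $\nu(x)=\frac1x\mathbb{E}[(U_p(x)-x)^2]$ and $\theta(x)=\frac{2\rho(x)}{\nu(x)}$. Then: \begin{enumerate} \item $\mu=\lim_{x\to\infty}\frac{\mathbb{E}[U_p(x)]}{x}=1$; \item $\lim_{x\to\infty}\theta(x)=\delta$; \item there is a constant $C$ depending only on $p$ such that $\theta(x)\le\delta+C\log^4(x)/\sqrt x$ for all sufficiently large $x$. \end{enumerate}
   Context: For a cookie environment $p$, let $B_1,B_2,\dots$ be independent Bernoulli random variables with $\Pr[B_i=1]=p_i$ ($B_i=1$ is a ''success'', $B_i=0$ a ''failure''). For a positive integer $x$, $U_p(x)=\inf\{k\in\mathbb{N}:\sum_{i=1}^k(1-B_i)=x\}-x$, i.e. the number of successes before the $x$-th failure. *)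

From Stdlib Require Import Reals List.
From Coquelicot Require Import Coquelicot.
Import ListNotations.
Open Scope R_scope.

(* A cookie environment p : nat -> R; trial B_j (j = 1, 2, ...) is a success
   (true) with probability p j and a failure (false) with probability 1 - p j. *)
Definition bern (p : nat -> R) (j : nat) (b : bool) : R :=
  if b then p j else 1 - p j.

Fixpoint pattern_prob (p : nat -> R) (j : nat) (s : list bool) : R :=
  match s with
  | [] => 1
  | b :: s' => bern p j b * pattern_prob p (S j) s'
  end.

Fixpoint bool_seqs (n : nat) : list (list bool) :=
  match n with
  | O => [[]]
  | S n' => flat_map (fun s => [true :: s; false :: s]) (bool_seqs n')
  end.

Definition count_failures (s : list bool) : nat :=
  length (filter negb s).

(* The event {U_p(x) = k}: the (k+x)-th trial is the x-th failure, i.e. among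
   B_1..B_{k+x} there are exactly x failures and B_{k+x} is a failure. *)
Definition U_event (x k : nat) (s : list bool) : bool :=
  Nat.eqb (length s) (k + x) && Nat.eqb (count_failures s) x
  && negb (last s true).

Definition U_pmf (p : nat -> R) (x k : nat) : R :=
  fold_right Rplus 0
    (map (pattern_prob p 1%nat) (filter (U_event x k) (bool_seqs (k + x)))).

Definition EU (p : nat -> R) (x : nat) : R :=
  Series (fun k => INR k * U_pmf p x k).

Definition EU2 (p : nat -> R) (x : nat) : R :=
  Series (fun k => (INR k - INR x) ^ 2 * U_pmf p x k).

Definition rho (p : nat -> R) (x : nat) : R := EU p x - INR x.
Definition nu (p : nat -> R) (x : nat) : R := EU2 p x / INR x.
Definition theta (p : nat -> R) (x : nat) : R := 2 * rho p x / nu p x.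

(* Let t_j = sum_(i >= j) (2 p_i - 1).  Started at trial j, the walk
   (successes - failures) + t_(j+n) is a martingale in the number n of trials, and its
   increments have variance 4 p (1 - p) = 1 - (2 p - 1)^2.  Stopping it at the x-th failure
   gives x + delta - t_(x+1) <= E[U_p(x)] <= x + delta and E[(U_p(x) - x)^2] = 2 x + O(sqrt x);
   hence E[U_p(x)]/x -> 1, rho -> delta, nu -> 2 and theta -> delta, and since rho <= delta
   the excess of theta over delta is O(1/sqrt x).
   Optional stopping is justified by a maximum principle for the backward equation of the
   walk: the x-th failure comes almost surely, and second moments are finite because
   summability keeps the failure probabilities 1 - p_i away from 0. *)

From Stdlib Require Import Reals Lra Lia List.
From Coquelicot Require Import Coquelicot.
Import ListNotations.
Open Scope R_scope.

(* [U_pmf_from p r j k] is [Pr[U(r) = k]] for the trials numbered from [j], so that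
   [U_pmf p x = U_pmf_from p x 1]. *)
Fixpoint U_pmf_from (p : nat -> R) (r : nat) : nat -> nat -> R :=
  match r with
  | O => fun _ k => match k with O => 1 | S _ => 0 end
  | S r' => fix G (j k : nat) {struct k} : R :=
      match k with
      | O => (1 - p j) * U_pmf_from p r' (S j) O
      | S k' => p j * G (S j) k' + (1 - p j) * U_pmf_from p r' (S j) (S k')
      end
  end.

Lemma U_pmf_from_S0 p r j :
  U_pmf_from p (S r) j 0 = (1 - p j) * U_pmf_from p r (S j) 0.
Proof. reflexivity. Qed.

Lemma U_pmf_from_SS p r j k :
  U_pmf_from p (S r) j (S k)
  = p j * U_pmf_from p (S r) (S j) k + (1 - p j) * U_pmf_from p r (S j) (S k).
Proof. reflexivity. Qed.

Definition sum_list (l : list (list bool)) (F : list bool -> R) : R :=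
  fold_right Rplus 0 (map F l).

Lemma sum_list_filter l (P : list bool -> bool) g :
  fold_right Rplus 0 (map g (filter P l)) = sum_list l (fun s => if P s then g s else 0).
Proof.
  unfold sum_list; induction l as [|a l IH]; simpl; auto.
  destruct (P a); simpl; rewrite IH; lra.
Qed.

Lemma sum_list_flat_map l F :
  sum_list (flat_map (fun s => [true :: s; false :: s]) l) F
  = sum_list l (fun s => F (true :: s)) + sum_list l (fun s => F (false :: s)).
Proof. induction l as [|a l IH]; unfold sum_list in *; simpl; [lra|rewrite IH; lra]. Qed.

Lemma sum_list_ext l F G : (forall s, F s = G s) -> sum_list l F = sum_list l G.
Proof. intros H; unfold sum_list; f_equal; now apply map_ext. Qed.

Lemma sum_list_0 l : sum_list l (fun _ => 0) = 0.
Proof. induction l; unfold sum_list in *; simpl; [lra|rewrite IHl; lra]. Qed.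

Lemma sum_list_scal l c F : sum_list l (fun s => c * F s) = c * sum_list l F.
Proof. induction l; unfold sum_list in *; simpl; [lra|rewrite IHl; lra]. Qed.

Lemma U_event_true_0 r s : U_event r 0 (true :: s) = false.
Proof.
  unfold U_event, count_failures; destruct r as [|r]; simpl; auto.
  pose proof (filter_length_le negb s).
  destruct (Nat.eqb_spec (length s) r), (Nat.eqb_spec (length (filter negb s)) (S r));
    simpl; auto; lia.
Qed.

Lemma U_event_true_S r k s : U_event r (S k) (true :: s) = U_event r k s.
Proof. unfold U_event, count_failures; simpl; now destruct s. Qed.

Lemma U_event_false_SS r k s : U_event (S (S r)) k (false :: s) = U_event (S r) k s.
Proof.
  unfold U_event, count_failures; simpl.
  destruct s as [|b s]; simpl.
  - destruct (Nat.eqb_spec 1 (k + S (S r))); simpl; auto; lia.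
  - rewrite <- !plus_n_Sm; reflexivity.
Qed.

Lemma last_no_failures s : count_failures s = 0%nat -> last s true = true.
Proof.
  induction s as [|[] s IH]; unfold count_failures; simpl; auto; [|discriminate].
  destruct s; auto.
Qed.

Lemma U_event_false_1 k s : U_event 1 k (false :: s) = (Nat.eqb k 0 && Nat.eqb (length s) 0)%bool.
Proof.
  unfold U_event; rewrite Nat.add_1_r.
  change (count_failures (false :: s)) with (S (count_failures s)).
  destruct s as [|b s]; [now destruct k|].
  change (last (false :: b :: s) true) with (last (b :: s) true).
  cbn [length Nat.eqb]; rewrite !Bool.andb_false_r.
  destruct (Nat.eqb_spec (count_failures (b :: s)) 0) as [E|];
    [rewrite (last_no_failures _ E)|]; now rewrite ?Bool.andb_false_r.
Qed.

Definition pattern_sum (p : nat -> R) (r j k : nat) : R :=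
  sum_list (bool_seqs (k + r))
    (fun s => if U_event r k s then pattern_prob p j s else 0).

(* [r = 0] is excluded: [U_event 0 k s] never holds, while [U_pmf_from p 0 j 0 = 1]. *)
Lemma pattern_sum_eq p n : forall r j k, (k + r)%nat = n -> (1 <= r)%nat ->
  pattern_sum p r j k = U_pmf_from p r j k.
Proof.
  induction n as [|n IH]; intros r j k Hn Hr; [lia|].
  unfold pattern_sum; rewrite Hn; cbn [bool_seqs]; rewrite sum_list_flat_map.
  destruct r as [|r]; [lia|].
  assert (Hsucc : sum_list (bool_seqs n)
      (fun s => if U_event (S r) k (true :: s) then pattern_prob p j (true :: s) else 0)
    = match k with O => 0 | S k' => p j * U_pmf_from p (S r) (S j) k' end).
  { destruct k as [|k].
    - erewrite sum_list_ext; [apply sum_list_0|].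
      intros s; now rewrite U_event_true_0.
    - rewrite <- (IH (S r) (S j) k) by lia; unfold pattern_sum.
      replace (k + S r)%nat with n by lia; rewrite <- sum_list_scal; apply sum_list_ext.
      intros s; rewrite U_event_true_S; cbn [pattern_prob bern].
      destruct (U_event (S r) k s); lra. }
  assert (Hfail : sum_list (bool_seqs n)
      (fun s => if U_event (S r) k (false :: s) then pattern_prob p j (false :: s) else 0)
    = (1 - p j) * U_pmf_from p r (S j) k).
  { destruct r as [|r].
    - destruct k as [|k].
      + assert (n = 0%nat) by lia; subst n; cbn; lra.
      + erewrite sum_list_ext; [rewrite sum_list_0; cbn; lra|].
        intros s; now rewrite U_event_false_1.
    - rewrite <- (IH (S r) (S j) k) by lia; unfold pattern_sum.
      replace (k + S r)%nat with n by lia; rewrite <- sum_list_scal; apply sum_list_ext.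
      intros s; rewrite U_event_false_SS; cbn [pattern_prob bern].
      destruct (U_event (S r) k s); lra. }
  rewrite Hsucc, Hfail.
  destruct k; [rewrite U_pmf_from_S0; lra | now rewrite U_pmf_from_SS].
Qed.

Lemma U_pmf_eq_from p x k : (1 <= x)%nat -> U_pmf p x k = U_pmf_from p x 1 k.
Proof.
  intros Hx; rewrite <- (pattern_sum_eq p (k + x) x 1 k eq_refl Hx).
  apply sum_list_filter.
Qed.

Fixpoint sum_lt (f : nat -> R) (N : nat) : R :=
  match N with O => 0 | S n => sum_lt f n + f n end.

Lemma sum_lt_ext f g N : (forall k, f k = g k) -> sum_lt f N = sum_lt g N.
Proof. intros H; induction N; simpl; rewrite ?IHN, ?H; auto. Qed.

Lemma sum_lt_plus f g N : sum_lt (fun k => f k + g k) N = sum_lt f N + sum_lt g N.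
Proof. induction N; simpl; lra. Qed.

Lemma sum_lt_scal c f N : sum_lt (fun k => c * f k) N = c * sum_lt f N.
Proof. induction N; simpl; [lra|rewrite IHN; lra]. Qed.

Lemma sum_lt_ge0 f N : (forall k, 0 <= f k) -> 0 <= sum_lt f N.
Proof. intros H; induction N; simpl; [lra|]; specialize (H N); lra. Qed.

Lemma sum_lt_le_mono f N M : (forall k, 0 <= f k) -> (N <= M)%nat -> sum_lt f N <= sum_lt f M.
Proof. intros H HNM; induction HNM; simpl; [lra|]; specialize (H m); lra. Qed.

Lemma sum_n_sum_lt (a : nat -> R) n : sum_n a n = sum_lt a (S n).
Proof. induction n; simpl; [rewrite sum_O; simpl; lra|now rewrite sum_Sn, IHn]. Qed.

Lemma sum_lt_shift (e : nat -> R) m : sum_lt (fun i => e (S i)) m = sum_lt e (S m) - e 0%nat.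
Proof. induction m; simpl in *; lra. Qed.

Definition quad_growth (f : nat -> R) := exists C, forall k, Rabs (f k) <= C * (1 + INR k ^ 2).

Lemma quad_growth_const a : quad_growth (fun _ => a).
Proof. exists (Rabs a); intros k; pose proof (Rabs_pos a); pose proof (pos_INR k); nra. Qed.

Lemma quad_growth_INR : quad_growth INR.
Proof.
  exists 1; intros k; rewrite Rabs_right by (apply Rle_ge, pos_INR).
  pose proof (pos_INR k); nra.
Qed.

Lemma quad_growth_plus f g : quad_growth f -> quad_growth g -> quad_growth (fun k => f k + g k).
Proof.
  intros [C1 H1] [C2 H2]; exists (C1 + C2); intros k.
  specialize (H1 k); specialize (H2 k); eapply Rle_trans; [apply Rabs_triang|lra].
Qed.

Lemma quad_growth_scal a f : quad_growth f -> quad_growth (fun k => a * f k).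
Proof.
  intros [C H]; exists (Rabs a * C); intros k; rewrite Rabs_mult, Rmult_assoc.
  apply Rmult_le_compat_l; [apply Rabs_pos|apply H].
Qed.

Lemma quad_growth_minus f g : quad_growth f -> quad_growth g -> quad_growth (fun k => f k - g k).
Proof.
  intros Hf Hg; destruct (quad_growth_plus _ _ Hf (quad_growth_scal (-1) g Hg)) as [C HC].
  exists C; intros k; replace (f k - g k) with (f k + -1 * g k) by lra; apply HC.
Qed.

Lemma quad_growth_shift f : quad_growth f -> quad_growth (fun k => f (S k)).
Proof.
  intros [C HC]; exists (3 * C); intros k; specialize (HC (S k)); rewrite S_INR in HC.
  pose proof (pos_INR k); pose proof (Rabs_pos (f (S k))).
  assert (0 <= C) by nra.
  replace (3 * C * (1 + INR k ^ 2)) with (C * (3 * (1 + INR k ^ 2))) by ring.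
  apply (Rle_trans _ _ _ HC), Rmult_le_compat_l; nra.
Qed.

Lemma quad_growth_sq_dev (x : R) : quad_growth (fun k => (INR k - x) ^ 2).
Proof.
  exists (2 + 2 * x ^ 2); intros k; rewrite Rabs_right by (apply Rle_ge, pow2_ge_0).
  pose proof (pow2_ge_0 (INR k + x)); pose proof (pow2_ge_0 (x * INR k)); nra.
Qed.

Section Environment.

Variable p : nat -> R.
Hypothesis p_range : forall i, 1 / 2 <= p i < 1.

Lemma U_pmf_from_ge0 r j k : 0 <= U_pmf_from p r j k.
Proof.
  revert j k; induction r as [|r IH]; intros j k; [destruct k; simpl; lra|].
  revert j; induction k as [|k IHk]; intros j; pose proof (p_range j).
  - rewrite U_pmf_from_S0; specialize (IH (S j) 0%nat); nra.
  - rewrite U_pmf_from_SS; specialize (IHk (S j)); specialize (IH (S j) (S k)); nra.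
Qed.

Definition E_trunc (N r j : nat) (f : nat -> R) : R :=
  sum_lt (fun k => f k * U_pmf_from p r j k) N.

Definition mass_trunc (N r j : nat) : R := E_trunc N r j (fun _ => 1).

Lemma E_trunc_S N r j f :
  E_trunc (S N) (S r) j f
  = p j * E_trunc N (S r) (S j) (fun k => f (S k)) + (1 - p j) * E_trunc (S N) r (S j) f.
Proof.
  unfold E_trunc; revert j; induction N as [|N IH]; intros j.
  - cbn [sum_lt]; rewrite U_pmf_from_S0; lra.
  - change (sum_lt (fun k => f k * U_pmf_from p (S r) j k) (S (S N)))
      with (sum_lt (fun k => f k * U_pmf_from p (S r) j k) (S N)
            + f (S N) * U_pmf_from p (S r) j (S N)).
    rewrite IH, U_pmf_from_SS; cbn [sum_lt]; lra.
Qed.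

Lemma E_trunc_r0 N j f : E_trunc (S N) 0 j f = f 0%nat.
Proof. unfold E_trunc; induction N; simpl in *; lra. Qed.

Lemma E_trunc_plus N r j f g :
  E_trunc N r j (fun k => f k + g k) = E_trunc N r j f + E_trunc N r j g.
Proof. unfold E_trunc; rewrite <- sum_lt_plus; apply sum_lt_ext; intros; lra. Qed.

Lemma E_trunc_scal N r j a f : E_trunc N r j (fun k => a * f k) = a * E_trunc N r j f.
Proof. unfold E_trunc; rewrite <- sum_lt_scal; apply sum_lt_ext; intros; lra. Qed.

Lemma E_trunc_ge0 N r j f : (forall k, 0 <= f k) -> 0 <= E_trunc N r j f.
Proof.
  intros Hf; apply sum_lt_ge0; intros k.
  apply Rmult_le_pos; [apply Hf|apply U_pmf_from_ge0].
Qed.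

Lemma mass_trunc_range N r j : 0 <= mass_trunc N r j <= 1.
Proof.
  split; [apply E_trunc_ge0; intros; lra|].
  revert r j; induction N as [|N IH]; intros r j; [unfold mass_trunc, E_trunc; simpl; lra|].
  induction r as [|r IHr] in j |- *; unfold mass_trunc.
  - rewrite E_trunc_r0; lra.
  - rewrite E_trunc_S; specialize (IH (S r) (S j)); specialize (IHr (S j)).
    pose proof (p_range j); unfold mass_trunc in *; nra.
Qed.

(* [t] plays the role of the tail sums [sum_(i >= j) (2 p_i - 1)]. *)
Variables (t : nat -> R) (T : R).
Hypothesis t_step : forall j, t (S j) = t j - (2 * p j - 1).
Hypothesis t_range : forall j, 0 <= t j <= T.

Lemma t_antitone j n : t (j + n)%nat <= t j.
Proof.
  induction n as [|n IH]; [rewrite Nat.add_0_r; lra|].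
  rewrite Nat.add_succ_r, t_step; pose proof (p_range (j + n)); lra.
Qed.

(* Optional stopping for the martingale [successes - failures + t]:
   [E[min(U, N)] <= r + t_j], with the defect mass counted at level [N]. *)
Lemma E_trunc_INR_stopped N r j :
  E_trunc N r j INR + INR N * (1 - mass_trunc N r j) <= INR r + t j.
Proof.
  revert r j; induction N as [|N IH]; intros r j.
  - unfold mass_trunc, E_trunc; simpl; pose proof (t_range j); pose proof (pos_INR r); lra.
  - induction r as [|r IHr] in j |- *; unfold mass_trunc.
    + rewrite !E_trunc_r0; simpl; pose proof (t_range j); lra.
    + rewrite !E_trunc_S.
      replace (E_trunc N (S r) (S j) (fun k => INR (S k)))
        with (E_trunc N (S r) (S j) INR + mass_trunc N (S r) (S j))
        by (unfold mass_trunc; rewrite <- E_trunc_plus;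
            apply sum_lt_ext; intros; rewrite S_INR; lra).
      specialize (IH (S r) (S j)); specialize (IHr (S j)); unfold mass_trunc in *.
      pose proof (mass_trunc_range N (S r) (S j)); pose proof (mass_trunc_range (S N) r (S j)).
      unfold mass_trunc in *; rewrite t_step in IH, IHr; rewrite !S_INR in *.
      pose proof (p_range j); nra.
Qed.

Lemma E_trunc_INR_le N r j : E_trunc N r j INR <= INR r + T.
Proof.
  pose proof (E_trunc_INR_stopped N r j); pose proof (mass_trunc_range N r j).
  pose proof (pos_INR N); pose proof (t_range j); nra.
Qed.

Lemma mass_trunc_defect N r j : INR N * (1 - mass_trunc N r j) <= INR r + T.
Proof.
  pose proof (E_trunc_INR_stopped N r j); pose proof (t_range j).
  assert (0 <= E_trunc N r j INR) by (apply E_trunc_ge0, pos_INR); lra.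
Qed.

Variable c : R.
Hypothesis c_pos : 0 < c.
Hypothesis c_le_fail : forall i, c <= 1 - p i.

(* The uniform lower bound [c] on failure probabilities is what makes second moments finite. *)
Lemma E_trunc_sq_le N r j :
  E_trunc N r j (fun k => INR k ^ 2) <= (3 + 2 * T) / c * (INR r ^ 2 + INR r).
Proof.
  assert (HT : 0 <= T) by (pose proof (t_range 0); lra).
  set (K := (3 + 2 * T) / c).
  assert (HK : K * c = 3 + 2 * T) by (unfold K; field; lra).
  assert (HK0 : 0 <= K) by (unfold K; apply Rdiv_le_0_compat; lra).
  revert r j; induction N as [|N IH]; intros r j.
  - unfold E_trunc; simpl; pose proof (pos_INR r); nra.
  - induction r as [|r IHr] in j |- *; [rewrite E_trunc_r0; simpl; lra|].
    rewrite E_trunc_S.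
    replace (E_trunc N (S r) (S j) (fun k => INR (S k) ^ 2))
      with (E_trunc N (S r) (S j) (fun k => INR k ^ 2)
            + 2 * E_trunc N (S r) (S j) INR + mass_trunc N (S r) (S j))
      by (unfold mass_trunc; rewrite <- E_trunc_scal, <- !E_trunc_plus;
          apply sum_lt_ext; intros; rewrite S_INR; lra).
    specialize (IH (S r) (S j)); specialize (IHr (S j)).
    pose proof (E_trunc_INR_le N (S r) (S j)); pose proof (mass_trunc_range N (S r) (S j)).
    assert (0 <= E_trunc (S N) r (S j) (fun k => INR k ^ 2))
      by (apply E_trunc_ge0; intros; apply pow2_ge_0).
    rewrite !S_INR in *; pose proof (p_range j); pose proof (c_le_fail j); pose proof (pos_INR r).
    set (A := E_trunc N (S r) (S j) (fun k => INR k ^ 2)) in *.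
    set (B := E_trunc (S N) r (S j) (fun k => INR k ^ 2)) in *.
    set (M := E_trunc N (S r) (S j) INR) in *.
    set (m := mass_trunc N (S r) (S j)) in *.
    set (x := INR r) in *.
    assert ((1 - p j) * K >= c * K) by nra.
    assert (p j * (2 * (x + 1 + T) + 1) <= (1 - p j) * (K * (2 * x + 2))) by nra.
    nra.
Qed.

Definition moment_bound (r : nat) : R := 1 + (3 + 2 * T) / c * (INR r ^ 2 + INR r).

Definition E_from (r j : nat) (f : nat -> R) : R := Series (fun k => f k * U_pmf_from p r j k).

Lemma second_moment_series r j :
  ex_series (fun k => (1 + INR k ^ 2) * U_pmf_from p r j k) /\
  Series (fun k => (1 + INR k ^ 2) * U_pmf_from p r j k) <= moment_bound r.
Proof.
  set (u := sum_n (fun k => (1 + INR k ^ 2) * U_pmf_from p r j k)).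
  assert (Hb : forall n, u n <= moment_bound r).
  { intros n; unfold u; rewrite sum_n_sum_lt.
    change (E_trunc (S n) r j (fun k => 1 + INR k ^ 2) <= moment_bound r).
    rewrite E_trunc_plus; fold (mass_trunc (S n) r j).
    pose proof (mass_trunc_range (S n) r j); pose proof (E_trunc_sq_le (S n) r j).
    unfold moment_bound; lra. }
  assert (Hinc : forall n, u n <= u (S n)).
  { intros n; unfold u; rewrite sum_Sn; change (plus ?a ?b) with (a + b).
    pose proof (U_pmf_from_ge0 r j (S n)); pose proof (pow2_ge_0 (INR (S n))); nra. }
  destruct (ex_finite_lim_seq_incr _ _ Hinc Hb) as [l Hl].
  split; [now exists l|].
  rewrite (is_series_unique _ l Hl).
  exact (is_lim_seq_le _ _ _ _ Hb Hl (is_lim_seq_const _)).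
Qed.

Lemma E_from_bound r j f C : (forall k, Rabs (f k) <= C * (1 + INR k ^ 2)) ->
  ex_series (fun k => f k * U_pmf_from p r j k) /\ Rabs (E_from r j f) <= C * moment_bound r.
Proof.
  intros Hf; destruct (second_moment_series r j) as [Hex Hle].
  assert (HC : 0 <= C).
  { specialize (Hf 0%nat); pose proof (Rabs_pos (f 0%nat)); simpl in Hf; lra. }
  assert (Hab : forall k, Rabs (f k * U_pmf_from p r j k)
                          <= C * ((1 + INR k ^ 2) * U_pmf_from p r j k)).
  { intros k; pose proof (U_pmf_from_ge0 r j k).
    rewrite Rabs_mult, (Rabs_right (U_pmf_from p r j k)) by lra.
    specialize (Hf k); nra. }
  assert (Hexb := ex_series_scal_l C _ Hex).
  assert (Hexa : ex_series (fun k => Rabs (f k * U_pmf_from p r j k))).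
  { apply (ex_series_le (fun k => Rabs (f k * U_pmf_from p r j k))
                        (fun k => C * ((1 + INR k ^ 2) * U_pmf_from p r j k))); [|exact Hexb].
    intros k; change (norm (Rabs ?x)) with (Rabs (Rabs x)); rewrite Rabs_Rabsolu; apply Hab. }
  split; [now apply ex_series_Rabs|].
  eapply Rle_trans; [now apply Series_Rabs|].
  eapply Rle_trans; [apply Series_le; [|exact Hexb]; intros k; split; [apply Rabs_pos|apply Hab]|].
  rewrite Series_scal_l; now apply Rmult_le_compat_l.
Qed.

Lemma ex_series_E_from r j f : quad_growth f -> ex_series (fun k => f k * U_pmf_from p r j k).
Proof. intros [C HC]; exact (proj1 (E_from_bound r j f C HC)). Qed.

Lemma E_from_r0 j f : E_from 0 j f = f 0%nat.
Proof.
  apply is_series_unique.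
  enough (H : is_lim_seq (sum_n (fun k => f k * U_pmf_from p 0 j k)) (f 0%nat)) by exact H.
  apply (is_lim_seq_ext (fun _ => f 0%nat)); [|apply is_lim_seq_const].
  intros n; rewrite sum_n_sum_lt; symmetry; apply (E_trunc_r0 n j f).
Qed.

Lemma E_from_S r j f : quad_growth f ->
  E_from (S r) j f = p j * E_from (S r) (S j) (fun k => f (S k)) + (1 - p j) * E_from r (S j) f.
Proof.
  intros Hf; unfold E_from.
  set (a1 k := f (S k) * U_pmf_from p (S r) (S j) k).
  set (a2 k := f k * U_pmf_from p r (S j) k).
  assert (E1 : is_lim_seq (sum_n a1) (Series a1))
    by exact (Series_correct _ (ex_series_E_from (S r) (S j) _ (quad_growth_shift f Hf))).
  assert (E2 : is_lim_seq (sum_n a2) (Series a2))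
    by exact (Series_correct _ (ex_series_E_from r (S j) f Hf)).
  apply is_series_unique.
  enough (H : is_lim_seq (sum_n (fun k => f k * U_pmf_from p (S r) j k))
                (p j * Series a1 + (1 - p j) * Series a2)) by exact H.
  apply is_lim_seq_incr_1.
  apply (is_lim_seq_ext (fun n => p j * sum_n a1 n + (1 - p j) * sum_n a2 (S n))).
  { intros n; rewrite !sum_n_sum_lt; symmetry; apply (E_trunc_S (S n) r j f). }
  apply is_lim_seq_plus'.
  - exact (is_lim_seq_scal_l _ (p j) _ E1).
  - exact (is_lim_seq_scal_l _ (1 - p j) _ (proj1 (is_lim_seq_incr_1 _ _) E2)).
Qed.

Lemma E_from_ext r j f g : (forall k, f k = g k) -> E_from r j f = E_from r j g.
Proof. intros H; unfold E_from; apply Series_ext; intros k; now rewrite H. Qed.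

Lemma E_from_plus r j f g : quad_growth f -> quad_growth g ->
  E_from r j (fun k => f k + g k) = E_from r j f + E_from r j g.
Proof.
  intros Hf Hg; unfold E_from; rewrite <- Series_plus by now apply ex_series_E_from.
  apply Series_ext; intros; lra.
Qed.

Lemma E_from_scal r j a f : E_from r j (fun k => a * f k) = a * E_from r j f.
Proof. unfold E_from; rewrite <- Series_scal_l; apply Series_ext; intros; lra. Qed.

Lemma E_from_le r j f g : quad_growth f -> quad_growth g -> (forall k, f k <= g k) ->
  E_from r j f <= E_from r j g.
Proof.
  intros Hf Hg Hfg.
  assert (Hgf := quad_growth_minus g f Hg Hf).
  replace (E_from r j g) with (E_from r j f + E_from r j (fun k => g k - f k))
    by (rewrite <- E_from_plus by auto; apply E_from_ext; intros; lra).
  enough (0 <= E_from r j (fun k => g k - f k)) by lra.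
  replace 0 with (Series (fun k => 0 * ((g k - f k) * U_pmf_from p r j k)))
    by (rewrite Series_scal_l; lra).
  apply Series_le; [|now apply ex_series_E_from].
  intros k; pose proof (U_pmf_from_ge0 r j k); specialize (Hfg k); split; nra.
Qed.

Lemma le_0_of_mul_INR_le (z A : R) : (forall N, (1 <= N)%nat -> z * INR N <= A) -> z <= 0.
Proof.
  intros H; destruct (Rle_lt_dec z 0) as [|Hz]; [easy|exfalso].
  destruct (archimed_cor1 (z / (Rabs A + 1))) as [N [HN HN0]];
    [apply Rdiv_lt_0_compat; pose proof (Rabs_pos A); lra|].
  assert (HNp : 0 < INR N) by (apply lt_0_INR; lia).
  specialize (H N HN0); pose proof (Rle_abs A); pose proof (Rabs_pos A).
  apply (Rmult_lt_compat_r (INR N * (Rabs A + 1))) in HN; [|nra].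
  replace (/ INR N * (INR N * (Rabs A + 1))) with (Rabs A + 1) in HN by (field; lra).
  replace (z / (Rabs A + 1) * (INR N * (Rabs A + 1))) with (z * INR N) in HN by (field; lra).
  lra.
Qed.

(* Maximum principle for the backward equation of [E_from]; it holds because the
   walk reaches its [r]-th failure almost surely ([mass_trunc_defect]). *)
Lemma subharmonic_le_0 (Z : nat -> nat -> R) (K : nat -> R) :
  (forall r j, Z r j <= K r) -> (forall j, Z 0%nat j <= 0) ->
  (forall r j, Z (S r) j <= p j * Z (S r) (S j) + (1 - p j) * Z r (S j)) ->
  forall r j, Z r j <= 0.
Proof.
  intros HK H0 Hrec.
  set (Km r := sum_lt (fun i => Rabs (K i)) (S r)).
  assert (Km_ge0 : forall r, 0 <= Km r) by (intros; apply sum_lt_ge0; intros; apply Rabs_pos).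
  assert (Km_ge : forall r, Z r 0%nat <= Km r /\ forall j, Z r j <= Km r).
  { intros r; enough (forall j, Z r j <= Km r) by auto.
    intros j; unfold Km; simpl.
    pose proof (sum_lt_ge0 (fun i => Rabs (K i)) r (fun i => Rabs_pos _)).
    pose proof (Rle_abs (K r)); pose proof (HK r j); lra. }
  assert (Km_S : forall r, Km r <= Km (S r))
    by (intros r; unfold Km; cbn [sum_lt]; pose proof (Rabs_pos (K (S r))); lra).
  assert (Hclaim : forall N r j, Z r j <= Km r * (1 - mass_trunc N r j)).
  { intros N; induction N as [|N IH]; intros r j.
    - unfold mass_trunc, E_trunc; simpl; rewrite Rminus_0_r, Rmult_1_r; apply Km_ge.
    - induction r as [|r IHr] in j |- *.
      + unfold mass_trunc; rewrite E_trunc_r0, Rminus_diag, Rmult_0_r; apply H0.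
      + eapply Rle_trans; [apply Hrec|]; unfold mass_trunc; rewrite E_trunc_S.
        fold (mass_trunc N (S r) (S j)) (mass_trunc (S N) r (S j)).
        specialize (IH (S r) (S j)); specialize (IHr (S j)).
        pose proof (mass_trunc_range N (S r) (S j)); pose proof (mass_trunc_range (S N) r (S j)).
        pose proof (Km_ge0 r); pose proof (Km_S r); pose proof (p_range j).
        assert (Km r * (1 - mass_trunc (S N) r (S j))
                <= Km (S r) * (1 - mass_trunc (S N) r (S j))) by nra.
        nra. }
  intros r j; apply (le_0_of_mul_INR_le _ (Km r * (INR r + T))); intros N _.
  pose proof (Hclaim N r j); pose proof (mass_trunc_defect N r j).
  pose proof (Km_ge0 r); pose proof (pos_INR N); nra.
Qed.

Lemma harmonic_eq_0 (Z : nat -> nat -> R) (K : nat -> R) :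
  (forall r j, Rabs (Z r j) <= K r) -> (forall j, Z 0%nat j = 0) ->
  (forall r j, Z (S r) j = p j * Z (S r) (S j) + (1 - p j) * Z r (S j)) ->
  forall r j, Z r j = 0.
Proof.
  intros HK H0 Hrec r j.
  enough (Z r j <= 0 /\ - Z r j <= 0) by lra.
  split; [apply (subharmonic_le_0 Z K)|apply (subharmonic_le_0 (fun r j => - Z r j) K)];
    intros.
  - apply (Rle_trans _ _ _ (Rle_abs _)), HK.
  - rewrite H0; lra.
  - rewrite Hrec at 1; lra.
  - apply (Rle_trans _ _ _ (Rle_abs _)); rewrite Rabs_Ropp; apply HK.
  - rewrite H0; lra.
  - rewrite Hrec at 1; lra.
Qed.

Lemma E_from_const r j a : E_from r j (fun _ => a) = a.
Proof.
  enough (H1 : E_from r j (fun _ => 1) = 1).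
  { rewrite (E_from_ext r j _ (fun _ => a * 1)) by (intros; lra).
    rewrite E_from_scal, H1; lra. }
  enough (E_from r j (fun _ => 1) - 1 = 0) by lra.
  apply (harmonic_eq_0 (fun r j => E_from r j (fun _ => 1) - 1) (fun r => moment_bound r + 1)).
  - intros r0 j0; destruct (E_from_bound r0 j0 (fun _ => 1) 1) as [_ Hb].
    { intros k; rewrite Rabs_R1; pose proof (pos_INR k); nra. }
    eapply Rle_trans; [apply Rabs_triang|]; rewrite Rabs_Ropp, Rabs_R1; lra.
  - intros j0; rewrite E_from_r0; lra.
  - intros r0 j0; rewrite (E_from_S r0 j0 _ (quad_growth_const 1)); lra.
Qed.

Lemma E_from_affine r j f g a b : quad_growth f -> quad_growth g ->
  E_from r j (fun k => f k + a * g k + b) = E_from r j f + a * E_from r j g + b.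
Proof.
  intros Hf Hg.
  rewrite E_from_plus, E_from_plus, E_from_scal, E_from_const;
    auto using quad_growth_plus, quad_growth_scal, quad_growth_const.
Qed.

(* Successes minus failures at the [r]-th failure, compensated by the tail sums: the
   stopped value of a martingale in the number of trials. *)
Definition walk (r j k : nat) : R := INR k - INR r - t j + t (j + k + r).

Lemma walk_bound r j k : Rabs (walk r j k) <= (INR r + 2 * T + 1) * (1 + INR k ^ 2).
Proof.
  unfold walk; pose proof (t_range j); pose proof (t_range (j + k + r)).
  pose proof (pos_INR k); pose proof (pos_INR r).
  assert (INR k <= 1 + INR k ^ 2) by nra.
  apply Rabs_le; split; nra.
Qed.

Lemma walk_sq_bound r j k :
  Rabs (walk r j k ^ 2) <= (2 + 2 * (INR r + 2 * T) ^ 2) * (1 + INR k ^ 2).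
Proof.
  rewrite Rabs_right by (apply Rle_ge, pow2_ge_0).
  unfold walk; pose proof (t_range j); pose proof (t_range (j + k + r)).
  pose proof (pos_INR k); pose proof (pos_INR r).
  set (w := INR k - INR r - t j + t (j + k + r)); set (A := INR r + 2 * T).
  assert (w ^ 2 <= (INR k + A) ^ 2) by (unfold w, A; nra).
  pose proof (pow2_ge_0 (INR k - A)); pose proof (pow2_ge_0 (A * INR k)); nra.
Qed.

Lemma quad_growth_walk r j : quad_growth (walk r j).
Proof. eexists; apply walk_bound. Qed.

Lemma quad_growth_walk_sq r j : quad_growth (fun k => walk r j k ^ 2).
Proof. eexists; apply walk_sq_bound. Qed.

Lemma walk_succ r j k : walk (S r) j (S k) = walk (S r) (S j) k + 2 * (1 - p j).
Proof.
  unfold walk; rewrite t_step, !S_INR.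
  replace (j + S k + S r)%nat with (S j + k + S r)%nat by lia; lra.
Qed.

Lemma walk_fail r j k : walk (S r) j k = walk r (S j) k - 2 * p j.
Proof.
  unfold walk; rewrite t_step, !S_INR.
  replace (j + k + S r)%nat with (S j + k + r)%nat by lia; lra.
Qed.

Lemma E_walk r j : E_from r j (walk r j) = 0.
Proof.
  revert r j; apply (harmonic_eq_0 (fun r j => E_from r j (walk r j))
                      (fun r => (INR r + 2 * T + 1) * moment_bound r)).
  - intros r j; exact (proj2 (E_from_bound r j _ _ (walk_bound r j))).
  - intros j; rewrite E_from_r0; unfold walk; rewrite !Nat.add_0_r; simpl; lra.
  - intros r j; rewrite (E_from_S r j _ (quad_growth_walk (S r) j)).
    rewrite (E_from_ext _ _ _
               (fun k => walk (S r) (S j) k + 0 * walk (S r) (S j) k + 2 * (1 - p j)))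
      by (intros k; rewrite walk_succ; lra).
    rewrite (E_from_ext _ _ (walk (S r) j)
               (fun k => walk r (S j) k + 0 * walk r (S j) k + - (2 * p j)))
      by (intros k; rewrite walk_fail; lra).
    rewrite !E_from_affine by apply quad_growth_walk; lra.
Qed.

Lemma E_walk_sq_S r j :
  E_from (S r) j (fun k => walk (S r) j k ^ 2)
  = p j * E_from (S r) (S j) (fun k => walk (S r) (S j) k ^ 2)
    + (1 - p j) * E_from r (S j) (fun k => walk r (S j) k ^ 2) + 4 * p j * (1 - p j).
Proof.
  rewrite (E_from_S r j _ (quad_growth_walk_sq (S r) j)).
  rewrite (E_from_ext _ _ _ (fun k => walk (S r) (S j) k ^ 2
             + 4 * (1 - p j) * walk (S r) (S j) k + 4 * (1 - p j) ^ 2))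
    by (intros k; rewrite walk_succ; ring).
  rewrite (E_from_ext _ _ (fun k => walk (S r) j k ^ 2)
             (fun k => walk r (S j) k ^ 2 + - 4 * p j * walk r (S j) k + 4 * p j ^ 2))
    by (intros k; rewrite walk_fail; ring).
  rewrite !E_from_affine, !E_walk by first [apply quad_growth_walk_sq|apply quad_growth_walk].
  ring.
Qed.

(* Each trial adds [4 p (1 - p) = 1 - (2 p - 1)^2] to the variance, and [r] failures take
   about [2 r] trials. *)
Lemma E_walk_sq_bounds r j :
  2 * INR r - t j <= E_from r j (fun k => walk r j k ^ 2) <= 2 * INR r + t j.
Proof.
  assert (Hb : forall r j, Rabs (E_from r j (fun k => walk r j k ^ 2))
                           <= (2 + 2 * (INR r + 2 * T) ^ 2) * moment_bound r)
    by (intros; exact (proj2 (E_from_bound _ _ _ _ (walk_sq_bound _ _)))).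
  assert (H0 : forall j, E_from 0 j (fun k => walk 0 j k ^ 2) = 0)
    by (intros; rewrite E_from_r0; unfold walk; rewrite !Nat.add_0_r; simpl; lra).
  split.
  - enough (2 * INR r - t j - E_from r j (fun k => walk r j k ^ 2) <= 0) by lra.
    revert r j; apply (subharmonic_le_0 _
      (fun r => 2 * INR r + (2 + 2 * (INR r + 2 * T) ^ 2) * moment_bound r)).
    + intros r j; pose proof (Hb r j) as Hrj; pose proof (t_range j).
      apply Rabs_le_between in Hrj; lra.
    + intros j; rewrite H0; pose proof (t_range j); simpl; lra.
    + intros r j; rewrite E_walk_sq_S, t_step, S_INR; pose proof (p_range j); nra.
  - enough (E_from r j (fun k => walk r j k ^ 2) - 2 * INR r - t j <= 0) by lra.
    revert r j; apply (subharmonic_le_0 _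
      (fun r => (2 + 2 * (INR r + 2 * T) ^ 2) * moment_bound r)).
    + intros r j; pose proof (Hb r j) as Hrj; pose proof (t_range j); pose proof (pos_INR r).
      apply Rabs_le_between in Hrj; lra.
    + intros j; rewrite H0; pose proof (t_range j); simpl; lra.
    + intros r j; rewrite E_walk_sq_S, t_step, S_INR; pose proof (p_range j); nra.
Qed.

Lemma quad_growth_t_shift j r : quad_growth (fun k => t (j + k + r)).
Proof.
  exists T; intros k; pose proof (t_range (j + k + r)).
  rewrite Rabs_right by lra; pose proof (pow2_ge_0 (INR k)); nra.
Qed.

Lemma E_from_INR_bounds r j : INR r + t j - t (j + r) <= E_from r j INR <= INR r + t j.
Proof.
  pose proof (E_walk r j) as E.
  rewrite (E_from_ext _ _ _ (fun k => INR k + 1 * t (j + k + r) + (- INR r - t j))) in E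
    by (intros; unfold walk; lra).
  rewrite E_from_affine in E by auto using quad_growth_INR, quad_growth_t_shift.
  assert (L1 : E_from r j (fun k => t (j + k + r)) <= E_from r j (fun _ => t (j + r)%nat)).
  { apply E_from_le; auto using quad_growth_t_shift, quad_growth_const.
    intros k; replace (j + k + r)%nat with (j + r + k)%nat by lia; apply t_antitone. }
  assert (L2 : E_from r j (fun _ => 0) <= E_from r j (fun k => t (j + k + r))).
  { apply E_from_le; auto using quad_growth_t_shift, quad_growth_const.
    intros k; apply t_range. }
  rewrite !E_from_const in L1, L2; lra.
Qed.

Lemma sq_add_bounds (w d tau eps : R) : 0 <= d <= tau -> 0 < eps < 1 ->
  (1 - eps) * w ^ 2 - tau ^ 2 / eps <= (w + d) ^ 2
  <= (1 + eps) * w ^ 2 + (1 + / eps) * tau ^ 2.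
Proof.
  intros Hd He.
  assert (Hl : 0 <= (eps * w + d) ^ 2 / eps) by (apply Rdiv_le_0_compat; [apply pow2_ge_0|lra]).
  assert (Hu : 0 <= (eps * w - d) ^ 2 / eps) by (apply Rdiv_le_0_compat; [apply pow2_ge_0|lra]).
  replace ((eps * w + d) ^ 2 / eps) with (eps * w ^ 2 + 2 * w * d + d ^ 2 / eps) in Hl
    by (field; lra).
  replace ((eps * w - d) ^ 2 / eps) with (eps * w ^ 2 - 2 * w * d + d ^ 2 / eps) in Hu
    by (field; lra).
  assert (Hdt : d ^ 2 <= tau ^ 2) by (apply pow_incr; lra).
  assert (Hinv : 1 <= / eps) by (rewrite <- Rinv_1; apply Rinv_le_contravar; lra).
  unfold Rdiv in *; split; nra.
Qed.

Lemma E_from_sq_dev_bounds r j eps : 0 < eps < 1 ->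
  (1 - eps) * (2 * INR r - t j) - t j ^ 2 / eps <= E_from r j (fun k => (INR k - INR r) ^ 2)
  <= (1 + eps) * (2 * INR r + t j) + (1 + / eps) * t j ^ 2.
Proof.
  intros He; pose proof (E_walk_sq_bounds r j) as Hw.
  assert (Hdev : forall k, INR k - INR r = walk r j k + (t j - t (j + k + r)))
    by (intros; unfold walk; lra).
  assert (Hd : forall k, 0 <= t j - t (j + k + r) <= t j).
  { intros k; rewrite <- Nat.add_assoc.
    pose proof (t_range (j + (k + r))); pose proof (t_antitone j (k + r)); lra. }
  assert (Hg : quad_growth (fun k => 0 + (1 - eps) * walk r j k ^ 2 + - (t j ^ 2 / eps)))
    by auto using quad_growth_plus, quad_growth_scal, quad_growth_const, quad_growth_walk_sq.
  assert (Hg' : quad_growth (fun k => 0 + (1 + eps) * walk r j k ^ 2 + (1 + / eps) * t j ^ 2))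
    by auto using quad_growth_plus, quad_growth_scal, quad_growth_const, quad_growth_walk_sq.
  pose proof (quad_growth_sq_dev (INR r)) as Hsq.
  split.
  - eapply Rle_trans; [|apply (E_from_le _ _ _ _ Hg Hsq)].
    + rewrite E_from_affine, E_from_const by auto using quad_growth_const, quad_growth_walk_sq.
      assert ((1 - eps) * (2 * INR r - t j) <= (1 - eps) * E_from r j (fun k => walk r j k ^ 2))
        by (apply Rmult_le_compat_l; lra); lra.
    + intros k; rewrite Hdev; pose proof (sq_add_bounds (walk r j k) _ _ _ (Hd k) He); lra.
  - eapply Rle_trans; [apply (E_from_le _ _ _ _ Hsq Hg')|].
    + intros k; rewrite Hdev; pose proof (sq_add_bounds (walk r j k) _ _ _ (Hd k) He); lra.
    + rewrite E_from_affine, E_from_const by auto using quad_growth_const, quad_growth_walk_sq.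
      assert ((1 + eps) * E_from r j (fun k => walk r j k ^ 2) <= (1 + eps) * (2 * INR r + t j))
        by (apply Rmult_le_compat_l; lra); lra.
Qed.

Lemma E_from_sq_dev_near r j : (2 <= r)%nat ->
  Rabs (E_from r j (fun k => (INR k - INR r) ^ 2) - 2 * INR r)
  <= (2 + 2 * t j + 2 * t j ^ 2) * sqrt (INR r).
Proof.
  intros Hr; set (s := sqrt (INR r)).
  assert (Hr0 : 0 < INR r) by (apply lt_0_INR; lia).
  assert (Hss : s * s = INR r) by (apply sqrt_sqrt; lra).
  assert (Hs1 : 1 < s).
  { unfold s; rewrite <- sqrt_1; apply sqrt_lt_1_alt; split; [lra|].
    apply lt_1_INR; lia. }
  assert (Hu : 0 < / s < 1)
    by (split; [apply Rinv_0_lt_compat|rewrite <- Rinv_1; apply Rinv_lt_contravar]; lra).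
  destruct (E_from_sq_dev_bounds r j (/ s) Hu) as [L U].
  rewrite Rinv_inv in U; replace (t j ^ 2 / / s) with (t j ^ 2 * s) in L by (field; lra).
  pose proof (t_range j); pose proof (pow2_ge_0 (t j)).
  assert (/ s * s = 1) by (field; lra).
  apply Rabs_le_between; rewrite <- Hss in *; split; nra.
Qed.

End Environment.

Lemma is_lim_seq_sqrt_INR : is_lim_seq (fun x => sqrt (INR x)) p_infty.
Proof. exact (filterlim_comp _ _ _ INR sqrt _ _ _ is_lim_seq_INR filterlim_sqrt_p). Qed.

Lemma eventually_gt_sqrt_INR (M : R) : eventually (fun x => M < sqrt (INR x)).
Proof. exact (proj2 (is_lim_seq_spec _ _) is_lim_seq_sqrt_INR M). Qed.

Lemma eventually_ge_nat (n : nat) : eventually (fun x => (n <= x)%nat).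
Proof. now exists n. Qed.

Lemma ln_ge1 x : 3 <= x -> 1 <= ln x.
Proof.
  intros Hx; rewrite <- ln_exp at 1; apply ln_le; [apply exp_pos|].
  pose proof exp_le_3; lra.
Qed.

Section Asymptotics.

Variables (delta K : R) (rho m2 gap : nat -> R).
Hypothesis delta_ge0 : 0 <= delta.
Hypothesis rho_range : forall x, (1 <= x)%nat -> delta - gap x <= rho x <= delta.
Hypothesis gap_lim : is_lim_seq gap 0.
Hypothesis m2_near : forall x, (2 <= x)%nat -> Rabs (m2 x - 2 * INR x) <= K * sqrt (INR x).

Lemma rho_lim : is_lim_seq rho delta.
Proof.
  apply (is_lim_seq_le_le_loc (fun x => delta - gap x) _ (fun _ => delta)).
  - exists 1%nat; apply rho_range.
  - replace (Finite delta) with (Rbar_minus delta 0) by (simpl; f_equal; ring).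
    apply is_lim_seq_minus'; [apply is_lim_seq_const|exact gap_lim].
  - apply is_lim_seq_const.
Qed.

Lemma mean_ratio_lim : is_lim_seq (fun x => (INR x + rho x) / INR x) 1.
Proof.
  apply (is_lim_seq_ext_loc (fun x => 1 + rho x * / INR x)).
  { exists 1%nat; intros x Hx; assert (0 < INR x) by (apply lt_0_INR; lia); field; lra. }
  replace (Finite 1) with (Finite (1 + delta * 0)) by (f_equal; ring).
  apply is_lim_seq_plus'; [apply is_lim_seq_const|].
  apply is_lim_seq_mult'; [exact rho_lim|].
  exact (is_lim_seq_inv _ _ is_lim_seq_INR ltac:(discriminate)).
Qed.

Lemma m2_ratio_lim : is_lim_seq (fun x => m2 x / INR x) 2.
Proof.
  assert (Hinv : is_lim_seq (fun x => K * / sqrt (INR x)) (K * 0)) by exact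
    (is_lim_seq_mult' _ _ _ _ (is_lim_seq_const K)
      (is_lim_seq_inv _ _ is_lim_seq_sqrt_INR ltac:(discriminate))).
  apply (is_lim_seq_le_le_loc (fun x => 2 - K * / sqrt (INR x)) _
                              (fun x => 2 + K * / sqrt (INR x))).
  - exists 2%nat; intros x Hx.
    assert (Hx0 : 0 < INR x) by (apply lt_0_INR; lia).
    set (s := sqrt (INR x)); assert (Hs : s * s = INR x) by (apply sqrt_sqrt; lra).
    assert (Hs0 : 0 < s) by (apply sqrt_lt_R0; lra).
    pose proof (m2_near x Hx) as Hm2; fold s in Hm2; apply Rabs_le_between in Hm2.
    replace (K * / s) with ((K * s) * / INR x) by (rewrite <- Hs; field; lra).
    replace (m2 x / INR x) with (2 + (m2 x - 2 * INR x) * / INR x) by (field; lra).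
    pose proof (Rinv_0_lt_compat _ Hx0); split; nra.
  - replace (Finite 2) with (Finite (2 - K * 0)) by (f_equal; ring).
    apply is_lim_seq_minus'; [apply is_lim_seq_const|exact Hinv].
  - replace (Finite 2) with (Finite (2 + K * 0)) by (f_equal; ring).
    apply is_lim_seq_plus'; [apply is_lim_seq_const|exact Hinv].
Qed.

Lemma theta_lim : is_lim_seq (fun x => 2 * rho x / (m2 x / INR x)) delta.
Proof.
  replace (Finite delta) with (Finite (2 * delta / 2)) by (f_equal; field).
  apply is_lim_seq_div'; [|exact m2_ratio_lim|lra].
  exact (is_lim_seq_mult' _ _ _ _ (is_lim_seq_const 2) rho_lim).
Qed.

(* Since [rho <= delta], the error of [theta] is controlled by [m2] alone: the rate is
   actually [O(1/sqrt x)]. *)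
Lemma theta_rate : exists C N, forall x, (N <= x)%nat ->
  2 * rho x / (m2 x / INR x) <= delta + C * ln (INR x) ^ 4 / sqrt (INR x).
Proof.
  exists (delta * Rabs K).
  destruct (filter_and _ _ (eventually_ge_nat 3) (eventually_gt_sqrt_INR (Rabs K + 1)))
    as [N HN].
  exists N; intros x Hx; destruct (HN x Hx) as [H3 Hs1].
  assert (Hx0 : 0 < INR x) by (apply lt_0_INR; lia).
  set (s := sqrt (INR x)) in *.
  assert (Hss : s * s = INR x) by (apply sqrt_sqrt; lra).
  pose proof (Rabs_pos K); pose proof (Rle_abs K).
  pose proof (m2_near x ltac:(lia)) as Hm2; fold s in Hm2; apply Rabs_le_between in Hm2.
  assert (Hm2x : INR x < m2 x) by (rewrite <- Hss in *; nra).
  pose proof (rho_range x ltac:(lia)).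
  assert (HL : 1 <= ln (INR x) ^ 4)
    by (apply pow_R1_Rle, ln_ge1; apply le_INR in H3; simpl in H3; lra).
  assert (Hth : 2 * rho x / (m2 x / INR x) - delta
                = (2 * INR x * (rho x - delta) + delta * (2 * INR x - m2 x)) / m2 x)
    by (field; lra).
  assert (Hm : 2 * INR x * (rho x - delta) + delta * (2 * INR x - m2 x) <= delta * Rabs K * s).
  { assert (K * s <= Rabs K * s) by (apply Rmult_le_compat_r; lra).
    assert (delta * (2 * INR x - m2 x) <= delta * (Rabs K * s)) by (apply Rmult_le_compat_l; lra).
    nra. }
  assert (delta * Rabs K * s / m2 x <= delta * Rabs K * ln (INR x) ^ 4 / s).
  { assert (Ha : 0 <= delta * Rabs K) by nra.
    assert (s / m2 x <= / s).
    { replace (/ s) with (s / INR x) by (rewrite <- Hss; field; lra).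
      apply Rmult_le_compat_l; [lra|apply Rinv_le_contravar; lra]. }
    assert (/ s <= ln (INR x) ^ 4 / s)
      by (unfold Rdiv; pose proof (Rinv_0_lt_compat s ltac:(lra)); nra).
    unfold Rdiv in *; rewrite (Rmult_assoc _ s), (Rmult_assoc _ (ln (INR x) ^ 4)).
    apply Rmult_le_compat_l; lra. }
  enough (2 * rho x / (m2 x / INR x) - delta <= delta * Rabs K * s / m2 x) by lra.
  rewrite Hth; apply Rmult_le_compat_r; [left; apply Rinv_0_lt_compat; lra|exact Hm].
Qed.

End Asymptotics.

Lemma finite_lower_bound (q : nat -> R) : (forall i, 0 < q i) ->
  forall N, exists c, 0 < c /\ forall i, (i <= N)%nat -> c <= q i.
Proof.
  intros Hq N; induction N as [|N [c [Hc Hle]]].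
  - exists (q 0%nat); split; [apply Hq|]; intros i Hi; replace i with 0%nat by lia; lra.
  - exists (Rmin c (q (S N))); split; [now apply Rmin_glb_lt|].
    intros i Hi; destruct (Nat.eq_dec i (S N)) as [->|]; [apply Rmin_r|].
    eapply Rle_trans; [apply Rmin_l|apply Hle; lia].
Qed.

(* Summability forces [p_i -> 1/2], so only finitely many [p_i] can approach [1]. *)
Lemma fail_prob_lower_bound (p : nat -> R) : (forall i, 1 / 2 <= p i < 1) ->
  ex_series (fun i => 2 * p (S i) - 1) -> exists c, 0 < c /\ forall i, c <= 1 - p i.
Proof.
  intros Hp Hs.
  destruct (proj2 (is_lim_seq_spec _ _) (ex_series_lim_0 _ Hs) (mkposreal (1 / 2) ltac:(lra)))
    as [N HN].
  destruct (finite_lower_bound (fun i => 1 - p i) ltac:(intros i; pose proof (Hp i); lra) (S N))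
    as [c [Hc Hle]].
  exists (Rmin (1 / 4) c); split; [apply Rmin_glb_lt; lra|].
  intros i; destruct (Nat.le_gt_cases i (S N)) as [Hi|Hi].
  - eapply Rle_trans; [apply Rmin_r|now apply Hle].
  - eapply Rle_trans; [apply Rmin_l|]; destruct i as [|n]; [lia|].
    specialize (HN n ltac:(lia)); simpl in HN; rewrite Rminus_0_r in HN.
    apply Rabs_def2 in HN; lra.
Qed.

(* The tail sums [t_j = sum_(i >= j) (2 p_i - 1)], with [t_0] adjusted to [delta + 2 p_0 - 1]
   since the series starts at [i = 1]. *)
Lemma tail_sums (p : nat -> R) (delta : R) : (forall i, 1 / 2 <= p i < 1) ->
  is_series (fun i => 2 * p (S i) - 1) delta ->
  exists t : nat -> R, (forall j, t (S j) = t j - (2 * p j - 1)) /\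
    (forall j, 0 <= t j <= delta + 1) /\ t 1%nat = delta /\ is_lim_seq (fun x => t (1 + x)%nat) 0.
Proof.
  intros Hp Hs; set (e i := 2 * p i - 1).
  assert (He : forall i, 0 <= e i <= 1) by (intros i; unfold e; pose proof (Hp i); lra).
  assert (Hsl : is_lim_seq (sum_n (fun i => e (S i))) delta) by exact Hs.
  exists (fun j => delta + e 0%nat - sum_lt e j).
  assert (Hpart : forall n, sum_n (fun i => e (S i)) n = sum_lt e (S (S n)) - e 0%nat)
    by (intros n; rewrite sum_n_sum_lt; apply sum_lt_shift).
  assert (Hle : forall n, sum_n (fun i => e (S i)) n <= delta).
  { intros n.
    assert (Hev : eventually (fun m => sum_n (fun i => e (S i)) n <= sum_n (fun i => e (S i)) m)).
    { exists n; intros m Hm; rewrite !Hpart.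
      pose proof (sum_lt_le_mono e (S (S n)) (S (S m)) (fun i => proj1 (He i)) ltac:(lia)); lra. }
    exact (is_lim_seq_le_loc _ _ _ _ Hev (is_lim_seq_const _) Hsl). }
  assert (Hd : 0 <= delta) by (specialize (Hle 0%nat); rewrite sum_O in Hle; pose proof (He 1%nat); lra).
  split; [intros j; simpl; unfold e; lra|].
  split; [|split; [simpl; lra|]].
  - intros j; pose proof (sum_lt_ge0 e j (fun i => proj1 (He i))); pose proof (He 0%nat).
    split; [|lra].
    destruct j as [|[|n]]; simpl; try lra.
    specialize (Hle n); rewrite Hpart in Hle; simpl in Hle; lra.
  - apply is_lim_seq_incr_1.
    apply (is_lim_seq_ext (fun n => delta - sum_n (fun i => e (S i)) n));
      [intros n; rewrite Hpart; simpl; lra|].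
    replace (Finite 0) with (Rbar_minus delta delta) by (simpl; f_equal; ring).
    exact (is_lim_seq_minus' _ _ _ _ (is_lim_seq_const delta) Hsl).
Qed.

Theorem corollary4p3 (p : nat -> R) (delta : R) :
  (forall i : nat, 1 / 2 <= p i < 1) ->
  is_series (fun i : nat => 2 * p (S i) - 1) delta ->
  (forall x : nat, (1 <= x)%nat ->
     ex_series (fun k : nat => INR k * U_pmf p x k) /\
     ex_series (fun k : nat => (INR k - INR x) ^ 2 * U_pmf p x k)) /\
  is_lim_seq (fun x : nat => EU p x / INR x) 1 /\
  is_lim_seq (fun x : nat => theta p x) delta /\
  (exists C : R, exists N : nat, forall x : nat, (N <= x)%nat ->
     theta p x <= delta + C * (ln (INR x)) ^ 4 / sqrt (INR x)).
Proof.
  intros Hp Hs.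
  destruct (tail_sums p delta Hp Hs) as (t & Ht_step & Ht_range & Ht1 & Ht_lim).
  destruct (fail_prob_lower_bound p Hp (ex_intro _ delta Hs)) as (c & Hc & Hc_le).
  assert (Hd : 0 <= delta) by (rewrite <- Ht1; apply Ht_range).
  assert (Hrho : forall x, (1 <= x)%nat -> delta - t (1 + x)%nat <= rho p x <= delta).
  { intros x Hx; unfold rho, EU; rewrite <- Ht1.
    rewrite (Series_ext _ (fun k => INR k * U_pmf_from p x 1 k))
      by (intros; now rewrite U_pmf_eq_from).
    pose proof (E_from_INR_bounds p Hp t _ Ht_step Ht_range c Hc Hc_le x 1); unfold E_from in *; lra. }
  assert (HB : forall x, (2 <= x)%nat ->
               Rabs (EU2 p x - 2 * INR x) <= (2 + 2 * delta + 2 * delta ^ 2) * sqrt (INR x)).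
  { intros x Hx; unfold EU2; rewrite <- Ht1.
    rewrite (Series_ext _ (fun k => (INR k - INR x) ^ 2 * U_pmf_from p x 1 k))
      by (intros; rewrite U_pmf_eq_from by lia; reflexivity).
    exact (E_from_sq_dev_near p Hp t _ Ht_step Ht_range c Hc Hc_le x 1 Hx). }
  split; [|split; [|split]].
  - pose proof (ex_series_E_from p Hp t _ Ht_step Ht_range c Hc Hc_le) as Hex.
    intros x Hx; split.
    + apply (ex_series_ext (fun k => INR k * U_pmf_from p x 1 k));
        [intros k; now rewrite U_pmf_eq_from|apply Hex, quad_growth_INR].
    + apply (ex_series_ext (fun k => (INR k - INR x) ^ 2 * U_pmf_from p x 1 k));
        [intros k; now rewrite U_pmf_eq_from|apply Hex, quad_growth_sq_dev].
  - apply (is_lim_seq_ext (fun x => (INR x + rho p x) / INR x));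
      [intros x; unfold rho; f_equal; ring|exact (mean_ratio_lim _ _ _ Hrho Ht_lim)].
  - exact (theta_lim _ _ _ _ _ Hrho Ht_lim HB).
  - exact (theta_rate _ _ _ _ _ Hd Hrho HB).
Qed.
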